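(* Let $k\in\mathbb N$, $E\subseteq W(A)$ and $\vec s\in V^\infty(A)$ such that $E$ is $k$-large in $\vec s$. Then there exists $\vec t\in V^\infty(A)$ with $\vec t\le_k\vec s$ such that $\langle\vec t\,\|\,(A_{k+n})_{n=0}^\infty\rangle_c\subseteq E$.
   Context: $\mathbb N=\{0,1,2,\dots\}$. Fix an increasing sequence $A_0\subseteq A_1\subseteq A_2\subseteq\cdots$ of finite nonempty alphabets and set $A=\bigcup_{n\in\mathbb N}A_n$. $W(A)$ denotes the set of all finite words over $A$, including the empty word; words are concatenated by juxtaposition. Fix a symbol $x\notin A$. A variable word over $A$ is a finite word over $A\cup\{x\}$ in which $x$ occurs at least once; $V(A)$ is the set of variable words. For $s(x)\in V(A)$ and $a\in A\cup\{x\}$, $s(a)$ is obtained by replacing every occurrence of $x$ by $a$. $V^\infty(A)$ is the set of infinite sequences of variable words. For a sequence $(s_n(x))_{n\in I}$ of variable words and a sequence $(B_n)_{n\in I}$ of finite subsets of $A$, both indexed by a set $I\subseteq\mathbb N$ that is either a finite interval or of the form $\{m,m+1,\dots\}$: the constant span $\langle (s_n(x))_{n\in I}\,\|\,(B_n)_{n\in I}\rangle_c$ is the set of all words $s_{l_0}(a_0)s_{l_1}(a_1)\cdots s_{l_j}(a_j)$ with $j\ge0$, $l_0<\dots<l_j$ in $I$ and $a_i\in B_{l_i}$ for each $i$; the variable span $\langle (s_n(x))_{n\in I}\,\|\,(B_n)_{n\in I}\rangle_v$ is the set of all words $s_{l_0}(a_0)\cdots s_{l_j}(a_j)$ with $j\ge0$,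 $l_0<\dots<l_j$ in $I$, $a_i\in B_{l_i}\cup\{x\}$ for each $i$, and at least one $a_i=x$. (E.g. $(A_{k+n})_{n=p}^{q}$ denotes the sequence $B_n=A_{k+n}$, $p\le n\le q$.) Extracted $k$-subsequences: let $k\in\mathbb N$ and $\vec s=(s_n(x))_{n=0}^\infty\in V^\infty(A)$. A finite sequence $(t_n(x))_{n=0}^l$ of variable words is an extracted $k$-subsequence of $\vec s$ if there exist integers $0=m_0<m_1<\dots<m_{l+1}$ with $t_i(x)\in\langle (s_n(x))_{n=m_i}^{m_{i+1}-1}\,\|\,(A_{k+n})_{n=m_i}^{m_{i+1}-1}\rangle_v$ for all $0\le i\le l$. An infinite sequence $\vec t=(t_n(x))_{n=0}^\infty$ is an extracted $k$-subsequence of $\vec s$ if each initial segment $(t_n(x))_{n=0}^l$ is a finite extracted $k$-subsequence of $\vec s$. We write $\vec t\le_k\vec s$. A set $E\subseteq W(A)$ is $k$-large in $\vec s\in V^\infty(A)$ if $E\cap\langle\vec w\,\|\,(A_{k+n})_{n=0}^\infty\rangle_c\neq\emptyset$ for every $\vec w\in V^\infty(A)$ with $\vec w\le_k\vec s$. *)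

(* Letters live in an arbitrary type T; the alphabets A_n are
   finite lists; the variable symbol x is [None] in [option T]. *)
From Stdlib Require Import List Arith Sorted.
Import ListNotations.

Definition alphabet_seq {T : Type} (A : nat -> list T) : Prop :=
  (forall n, A n <> []) /\ (forall n, incl (A n) (A (S n))).

Definition inA {T : Type} (A : nat -> list T) (a : T) : Prop := exists n, In a (A n).

Definition is_word {T : Type} (A : nat -> list T) (w : list T) : Prop :=
  Forall (inA A) w.

Definition is_vword {T : Type} (A : nat -> list T) (w : list (option T)) : Prop :=
  In None w /\ (forall a, In (Some a) w -> inA A a).

Definition is_vseq {T : Type} (A : nat -> list T) (s : nat -> list (option T)) : Prop :=
  forall n, is_vword A (s n).

Definition csubst {T : Type} (s : list (option T)) (a : T) : list T :=
  map (fun o => match o with None => a | Some b => b end) s.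

Definition vsubst {T : Type} (s : list (option T)) (a : option T) : list (option T) :=
  map (fun o => match o with None => a | Some b => Some b end) s.

Definition cspan {T : Type} (s : nat -> list (option T)) (B : nat -> list T)
  (I : nat -> Prop) (w : list T) : Prop :=
  exists ls : list (nat * T),
    ls <> [] /\
    Sorted (fun p q => fst p < fst q) ls /\
    Forall (fun p => I (fst p) /\ In (snd p) (B (fst p))) ls /\
    w = concat (map (fun p => csubst (s (fst p)) (snd p)) ls).

Definition vspan {T : Type} (s : nat -> list (option T)) (B : nat -> list T)
  (I : nat -> Prop) (w : list (option T)) : Prop :=
  exists ls : list (nat * option T),
    Sorted (fun p q => fst p < fst q) ls /\
    Forall (fun p => I (fst p) /\
              match snd p with None => True | Some a => In a (B (fst p)) end) ls /\
    (exists p, In p ls /\ snd p = None) /\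
    w = concat (map (fun p => vsubst (s (fst p)) (snd p)) ls).

Definition extracted_fin {T : Type} (A : nat -> list T) (k : nat)
  (s t : nat -> list (option T)) (l : nat) : Prop :=
  exists m : nat -> nat,
    m 0 = 0 /\
    (forall i, i <= l -> m i < m (S i)) /\
    (forall i, i <= l ->
       vspan s (fun n => A (k + n)) (fun n => m i <= n < m (S i)) (t i)).

Definition extracted {T : Type} (A : nat -> list T) (k : nat)
  (t s : nat -> list (option T)) : Prop :=
  forall l, extracted_fin A k s t l.

Definition k_large {T : Type} (A : nat -> list T) (k : nat)
  (E : list T -> Prop) (s : nat -> list (option T)) : Prop :=
  forall w, is_vseq A w -> extracted A k w s ->
    exists u, E u /\ cspan w (fun n => A (k + n)) (fun _ => True) u.

From Stdlib Require Import List Arith Sorted Lia Classical ClassicalEpsilon FunctionalExtensionality PropExtensionality.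
From mathcomp Require boolp classical_sets filter.
Import ListNotations.

(* The proof is the ultrafilter proof of Carlson's theorem.  Entries of [s] are encoded by
   located words: finite lists of (position, letter or variable) pairs, which form a
   semigroup under [lcat] (append the part of the second word lying beyond the first).
   - Abstract part: ultrafilters on a semigroup form a semigroup under [umul]; using the
     ultrafilter lemma, Zorn's lemma and compactness of chains of closed families we get
     the Ellis-Numakura lemma, minimal idempotents, and idempotents below a given idempotent
     inside a closed two-sided ideal.
   - For located words this yields a minimal idempotent [p] on constant words and an
     idempotent [q <= p] on variable words; by minimality every substitution image of [q]
     is [p] ([key_ultrafilters]).
   - Given [p B], a Galvin-Glazer recursion picks variable blocks whose constant
     combinations all lie in [B] ([combination_good]).
   - Evaluating the blocks along [s] and splitting on whether [p] contains the located
     words evaluating into [E] gives the partition theorem [span_homogeneous]; k-largeness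
     of [E] rules out the complementary case. *)

Record ultra {X : Type} (p : (X -> Prop) -> Prop) : Prop := {
  ultra_True : p (fun _ => True);
  ultra_False : ~ p (fun _ => False);
  ultra_mono : forall P Q : X -> Prop, p P -> (forall x, P x -> Q x) -> p Q;
  ultra_and : forall P Q : X -> Prop, p P -> p Q -> p (fun x => P x /\ Q x);
  ultra_dec : forall P : X -> Prop, p P \/ p (fun x => ~ P x) }.
Arguments ultra_True {X p}.
Arguments ultra_False {X p}.
Arguments ultra_mono {X p} _ [P Q].
Arguments ultra_and {X p} _ [P Q].
Arguments ultra_dec {X p} _ P.

Definition fip {X : Type} (F : (X -> Prop) -> Prop) : Prop :=
  forall l : list (X -> Prop), (forall P, In P l -> F P) -> exists x, forall P, In P l -> P x.

Definition generated {X : Type} (F : (X -> Prop) -> Prop) (P : X -> Prop) : Prop :=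
  exists l, (forall Q, In Q l -> F Q) /\ forall x, (forall Q, In Q l -> Q x) -> P x.

Lemma ultra_extend {X : Type} (F : (X -> Prop) -> Prop) :
  fip F -> exists p, ultra p /\ forall P, F P -> p P.
Proof.
intros HF.
assert (GF : filter.ProperFilter (generated F)).
{ constructor; [|constructor]; unfold generated; cbn.
  - intros [l [Fl Hl]]. destruct (HF l Fl) as [x Hx]. exact (Hl x Hx).
  - exists []. split; [intros ? []|intros; exact I].
  - intros P Q [l1 [F1 H1]] [l2 [F2 H2]]. exists (l1 ++ l2). split.
    + intros R HR. apply in_app_or in HR as [HR|HR]; auto.
    + intros x Hx. split; [apply H1|apply H2]; intros R HR; apply Hx, in_or_app; auto.
  - intros P Q PQ [l [Fl Hl]]. exists l. split; auto. }
destruct (filter.ultraFilterLemma GF) as [p [Up Gp]].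
exists p. split.
- pose proof (@filter.ultra_proper _ _ Up) as Pp.
  split.
  + exact filter.filterT.
  + exact (filter.filter_not_empty p).
  + intros P Q HP PQ. exact (filter.filterS PQ HP).
  + intros P Q HP HQ. exact (filter.filterI HP HQ).
  + intros P. exact (filter.in_ultra_setVsetC P Up).
- intros P FP. apply Gp. exists [P]. split.
  + intros Q [<-|[]]; exact FP.
  + intros x Hx. apply Hx; left; reflexivity.
Qed.

Lemma ultra_nonempty {X : Type} (p : (X -> Prop) -> Prop) (P : X -> Prop) :
  ultra p -> p P -> exists x, P x.
Proof.
intros Hp HP. apply NNPP; intro N. apply (ultra_False Hp).
apply (ultra_mono Hp HP). intros x Px. apply N. exists x; exact Px.
Qed.

Lemma ultra_not_both {X : Type} (p : (X -> Prop) -> Prop) (P : X -> Prop) :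
  ultra p -> p P -> p (fun x => ~ P x) -> False.
Proof.
intros Hp H1 H2. destruct (ultra_nonempty p _ Hp (ultra_and Hp H1 H2)) as [x [Px NPx]].
exact (NPx Px).
Qed.

Lemma ultra_ext {X : Type} (p q : (X -> Prop) -> Prop) :
  ultra p -> ultra q -> (forall P, p P -> q P) -> p = q.
Proof.
intros Hp Hq Hpq. extensionality P. apply propositional_extensionality. split; [apply Hpq|].
intros HqP. destruct (ultra_dec Hp P) as [HpP|HpnP]; [exact HpP|].
exfalso. exact (ultra_not_both q P Hq HqP (Hpq _ HpnP)).
Qed.

Lemma ultra_forall_in {X Y : Type} (p : (X -> Prop) -> Prop) (l : list Y) (P : Y -> X -> Prop) :
  ultra p -> (forall y, In y l -> p (P y)) -> p (fun x => forall y, In y l -> P y x).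
Proof.
intros Hp. induction l as [|a l IH]; intros Hl.
- apply (ultra_mono Hp (ultra_True Hp)). intros x _ y [].
- apply (ultra_mono Hp (ultra_and Hp (Hl a (or_introl eq_refl))
                                     (IH (fun y hy => Hl y (or_intror hy))))).
  intros x [Ha Hrest] y [<-|hy]; auto.
Qed.
Lemma zorn_preorder {X : Type} (x0 : X) (R : X -> X -> Prop) :
  (forall t, R t t) -> (forall r s t, R r s -> R s t -> R r t) ->
  (forall C : X -> Prop, (forall s t, C s -> C t -> R s t \/ R t s) ->
     exists u, forall s, C s -> R s u) ->
  exists t, forall s, R t s -> R s t.
Proof.
intros Hrefl Htrans Hchain.
destruct (classical_sets.ZL_preorder x0 (R := fun a b => boolp.asbool (R a b))) as [t Ht].
- intros t. apply boolp.asboolT, Hrefl.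
- intros r s t H1 H2. apply boolp.asboolT.
  exact (Htrans r s t (boolp.asboolW H1) (boolp.asboolW H2)).
- intros C HC. destruct (Hchain C) as [u Hu].
  + intros a b Ca Cb. destruct (HC a b Ca Cb) as [h|h]; [left|right]; exact (boolp.asboolW h).
  + exists u. intros s Cs. apply boolp.asboolT, Hu, Cs.
- exists t. intros s Hs. apply boolp.asboolW, Ht, boolp.asboolT, Hs.
Qed.

(* The semigroup of ultrafilters over a semigroup [(X, op)], i.e. its Stone-Cech
   compactification, with closed families of ultrafilters standing for closed sets. *)
Section StoneCechSemigroup.

Context {X : Type} (op : X -> X -> X).
Hypothesis op_assoc : forall a b c, op (op a b) c = op a (op b c).

Local Notation ufilter := ((X -> Prop) -> Prop).
Local Notation family := (ufilter -> Prop).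

Definition umul (p q : ufilter) : ufilter :=
  fun P => p (fun f => q (fun g => P (op f g))).

Lemma ultra_umul (p q : ufilter) : ultra p -> ultra q -> ultra (umul p q).
Proof.
intros Hp Hq. unfold umul. split.
- apply (ultra_mono Hp (ultra_True Hp)). intros f _. exact (ultra_True Hq).
- intros H. destruct (ultra_nonempty p _ Hp H) as [f Hf]. exact (ultra_False Hq Hf).
- intros P Q HP PQ. apply (ultra_mono Hp HP). intros f Hf. apply (ultra_mono Hq Hf). auto.
- intros P Q HP HQ. apply (ultra_mono Hp (ultra_and Hp HP HQ)).
  intros f [H1 H2]. exact (ultra_and Hq H1 H2).
- intros P. destruct (ultra_dec Hp (fun f => q (fun g => P (op f g)))) as [H|H]; [left; exact H|right].
  apply (ultra_mono Hp H). intros f Hf.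
  destruct (ultra_dec Hq (fun g => P (op f g))) as [H'|H']; [contradiction|exact H'].
Qed.

Lemma umul_assoc (p q r : ufilter) : umul (umul p q) r = umul p (umul q r).
Proof.
unfold umul. extensionality P. f_equal. extensionality f. f_equal. extensionality g.
f_equal. extensionality h. rewrite op_assoc. reflexivity.
Qed.

Lemma umul_intro (p q : ufilter) (P Dom : X -> Prop) (Fib : X -> X -> Prop) :
  ultra p -> ultra q -> p Dom -> (forall f, Dom f -> q (Fib f)) ->
  (forall f g, Dom f -> Fib f g -> P (op f g)) -> umul p q P.
Proof.
intros Hp Hq HD HF H. unfold umul. apply (ultra_mono Hp HD). intros f Hf.
apply (ultra_mono Hq (HF f Hf)). intros g Hg. exact (H f g Hf Hg).
Qed.

(* A closed family of ultrafilters: every ultrafilter containing all sets common to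
   the members of [Y] belongs to [Y] (closedness in the Stone-Cech topology). *)
Record closed (Y : family) : Prop := {
  closed_ultra : forall y, Y y -> ultra y;
  closed_limit : forall r, ultra r -> (forall P, (forall y, Y y -> y P) -> r P) -> Y r }.

Definition mul_closed (Y : family) : Prop := forall x y, Y x -> Y y -> Y (umul x y).

Lemma closed_inter (Y Z : family) : closed Y -> closed Z -> closed (fun r => Y r /\ Z r).
Proof.
intros [HY1 HY2] [HZ1 HZ2]. split.
- intros y [Yy _]. exact (HY1 y Yy).
- intros r Hr H. split.
  + apply (HY2 r Hr). intros P HP. apply H. intros y [Yy _]. exact (HP y Yy).
  + apply (HZ2 r Hr). intros P HP. apply H. intros y [_ Zy]. exact (HP y Zy).
Qed.

Definition ultra_over (F : (X -> Prop) -> Prop) (r : ufilter) : Prop :=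
  ultra r /\ forall P, F P -> r P.

Lemma closed_ultra_over (F : (X -> Prop) -> Prop) : closed (ultra_over F).
Proof.
split.
- intros y [Hy _]. exact Hy.
- intros r Hr H. split; [exact Hr|]. intros P FP. apply H. intros y [_ Hy]. exact (Hy P FP).
Qed.

Definition chain (C : family -> Prop) : Prop :=
  forall Y Z, C Y -> C Z -> (forall r, Y r -> Z r) \/ (forall r, Z r -> Y r).

Lemma closed_bigcap (C : family -> Prop) :
  (forall Y, C Y -> closed Y) -> (exists Y, C Y) -> closed (fun r => forall Y, C Y -> Y r).
Proof.
intros HC [Y0 CY0]. split.
- intros y Hy. exact (closed_ultra Y0 (HC Y0 CY0) y (Hy Y0 CY0)).
- intros r Hr H Y CY. apply (closed_limit Y (HC Y CY) r Hr).
  intros P HP. apply H. intros y Hy. exact (HP y (Hy Y CY)).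
Qed.

Lemma chain_bigcap_nonempty (C : family -> Prop) :
  (forall Y, C Y -> closed Y /\ exists y, Y y) -> chain C -> (exists Y, C Y) ->
  exists r, forall Y, C Y -> Y r.
Proof.
intros HC Hch [Y0 CY0].
destruct (ultra_extend (fun P => exists Y, C Y /\ forall y, Y y -> y P)) as [r [Hr HrF]].
- intros l Hl.
  assert (Hlow : exists Y, C Y /\ forall P, In P l -> forall y, Y y -> y P).
  { induction l as [|P l IH].
    - exists Y0. split; [exact CY0|intros ? []].
    - destruct (IH (fun Q hQ => Hl Q (or_intror hQ))) as [Y [CY HY]].
      destruct (Hl P (or_introl eq_refl)) as [Z [CZ HZ]].
      destruct (Hch Y Z CY CZ) as [YZ|ZY].
      + exists Y. split; [exact CY|]. intros Q [<-|hQ] y Yy; [exact (HZ y (YZ y Yy))|exact (HY Q hQ y Yy)].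
      + exists Z. split; [exact CZ|]. intros Q [<-|hQ] y Zy; [exact (HZ y Zy)|exact (HY Q hQ y (ZY y Zy))]. }
  destruct Hlow as [Y [CY HY]]. destruct (HC Y CY) as [cY [y Yy]].
  apply (ultra_nonempty y); [exact (closed_ultra Y cY y Yy)|].
  apply (ultra_forall_in y l (fun P x => P x)); [exact (closed_ultra Y cY y Yy)|].
  intros P HP. exact (HY P HP y Yy).
- exists r. intros Y CY. apply (closed_limit Y (proj1 (HC Y CY)) r Hr).
  intros P HP. apply HrF. exists Y. split; [exact CY|exact HP].
Qed.

Lemma closed_umul_right (Y : family) (p : ufilter) :
  closed Y -> ultra p -> closed (fun r => exists y, Y y /\ r = umul y p).
Proof.
intros cY Hp. split.
- intros r [y [Yy ->]]. exact (ultra_umul y p (closed_ultra Y cY y Yy) Hp).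
- intros r Hr H.
  set (F := fun P => (forall y, Y y -> y P) \/ exists B, r B /\ P = (fun f => p (fun g => B (op f g)))).
  destruct (ultra_extend F) as [x [Hx HxF]].
  + intros l Hl.
    assert (Hcover : exists F0 B0, (forall y, Y y -> y F0) /\ r B0 /\
              forall f, F0 f -> p (fun g => B0 (op f g)) -> forall P, In P l -> P f).
    { induction l as [|P l IH].
      - exists (fun _ => True), (fun _ => True). split; [|split; [exact (ultra_True Hr)|]].
        + intros y Yy. exact (ultra_True (closed_ultra Y cY y Yy)).
        + intros f _ _ ? [].
      - destruct (IH (fun Q hQ => Hl Q (or_intror hQ))) as [F0 [B0 [HF0 [HB0 Hcov]]]].
        destruct (Hl P (or_introl eq_refl)) as [HP|[B [rB ->]]].
        + exists (fun f => F0 f /\ P f), B0. split; [|split; [exact HB0|]].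
          * intros y Yy. exact (ultra_and (closed_ultra Y cY y Yy) (HF0 y Yy) (HP y Yy)).
          * intros f [F0f Pf] Hf Q [<-|hQ]; [exact Pf|exact (Hcov f F0f Hf Q hQ)].
        + exists F0, (fun z => B0 z /\ B z). split; [exact HF0|split; [exact (ultra_and Hr HB0 rB)|]].
          intros f F0f Hf Q [<-|hQ].
          * apply (ultra_mono Hp Hf). intros g [_ Bg]. exact Bg.
          * apply (Hcov f F0f); [|exact hQ]. apply (ultra_mono Hp Hf). intros g [B0g _]. exact B0g. }
    destruct Hcover as [F0 [B0 [HF0 [HB0 Hcov]]]].
    apply NNPP; intro Nx. apply (ultra_not_both r B0 Hr HB0). apply H.
    intros z [y [Yy ->]]. apply (ultra_mono (closed_ultra Y cY y Yy) (HF0 y Yy)).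
    intros f F0f. destruct (ultra_dec Hp (fun g => B0 (op f g))) as [Hf|Hf]; [|exact Hf].
    exfalso. apply Nx. exists f. exact (Hcov f F0f Hf).
  + exists x. split.
    * apply (closed_limit Y cY x Hx). intros P HP. apply HxF. left. exact HP.
    * apply ultra_ext; [exact Hr|exact (ultra_umul x p Hx Hp)|].
      intros P rP. apply HxF. right. exists P. split; [exact rP|reflexivity].
Qed.

Lemma closed_umul_fixed (Y : family) (p z : ufilter) :
  closed Y -> ultra p -> ultra z -> closed (fun y => Y y /\ umul y p = z).
Proof.
intros cY Hp Hz. split.
- intros y [Yy _]. exact (closed_ultra Y cY y Yy).
- intros r Hr H. split.
  + apply (closed_limit Y cY r Hr). intros P HP. apply H. intros y [Yy _]. exact (HP y Yy).
  + symmetry. apply ultra_ext; [exact Hz|exact (ultra_umul r p Hr Hp)|].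
    intros P zP. apply (H (fun f => p (fun g => P (op f g)))).
    intros y [_ e]. change (umul y p P). rewrite e. exact zP.
Qed.

Definition admissible (K : family -> Prop) (Y : family) : Prop :=
  closed Y /\ (exists y, Y y) /\ K Y.

Lemma minimal_admissible (K : family -> Prop) (Y0 : family) :
  admissible K Y0 ->
  (forall C, (forall Y, C Y -> admissible K Y) -> chain C -> (exists Y, C Y) ->
     K (fun r => forall Y, C Y -> Y r)) ->
  exists M, admissible K M /\ (forall r, M r -> Y0 r) /\
    forall Y, admissible K Y -> (forall r, Y r -> M r) -> forall r, M r -> Y r.
Proof.
intros AY0 HK.
set (Adm := fun Y => admissible K Y /\ forall r, Y r -> Y0 r).
assert (AdmY0 : Adm Y0) by (split; [exact AY0|auto]).
destruct (zorn_preorder Y0 (fun Y Z => Adm Y -> Adm Z /\ forall r, Z r -> Y r)) as [M HM].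
- intros Y AY. split; auto.
- intros Y1 Y2 Y3 H12 H23 A1. destruct (H12 A1) as [A2 S21]. destruct (H23 A2) as [A3 S32].
  split; auto.
- intros C HC. destruct (classic (exists Y, C Y /\ Adm Y)) as [[Y1 [CY1 AY1]]|NC].
  + set (C' := fun Y => C Y /\ Adm Y).
    assert (HC' : forall Y, C' Y -> admissible K Y) by (intros Y [_ [AY _]]; exact AY).
    assert (chC' : chain C').
    { intros Y Z [CY AY] [CZ AZ]. destruct (HC Y Z CY CZ) as [h|h].
      - right. exact (proj2 (h AY)).
      - left. exact (proj2 (h AZ)). }
    assert (neC' : exists Y, C' Y) by (exists Y1; split; assumption).
    exists (fun r => forall Y, C' Y -> Y r). intros Y CY AY. split.
    * split; [split; [|split]|].
      -- apply closed_bigcap; [intros Z HZ; exact (proj1 (HC' Z HZ))|exact neC'].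
      -- apply chain_bigcap_nonempty; [|exact chC'|exact neC'].
         intros Z HZ. destruct (HC' Z HZ) as [cZ [nZ _]]. split; assumption.
      -- exact (HK C' HC' chC' neC').
      -- intros r Hr. exact (proj2 AY1 r (Hr Y1 (conj CY1 AY1))).
    * intros r Hr. exact (Hr Y (conj CY AY)).
  + exists Y0. intros Y CY AY. exfalso. apply NC. exists Y. split; assumption.
- assert (AM : Adm M).
  { apply NNPP; intro NM. destruct (HM Y0 (fun AM => False_ind _ (NM AM)) AdmY0) as [AM _].
    exact (NM AM). }
  exists M. split; [exact (proj1 AM)|split; [exact (proj2 AM)|]].
  intros Y AY YM.
  assert (AdmY : Adm Y) by (split; [exact AY|intros r Yr; exact (proj2 AM r (YM r Yr))]).
  exact (proj2 (HM Y (fun _ => conj AdmY YM) AdmY)).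
Qed.

Lemma ellis_numakura (Y0 : family) :
  closed Y0 -> (exists y, Y0 y) -> mul_closed Y0 -> exists e, Y0 e /\ umul e e = e.
Proof.
intros cY0 nY0 sY0.
destruct (minimal_admissible mul_closed Y0) as [M [[cM [[p Mp] sM]] [MY0 minM]]].
- split; [exact cY0|split; [exact nY0|exact sY0]].
- intros C HC _ _ x y hx hy Y CY. destruct (HC Y CY) as [_ [_ sY]]. exact (sY x y (hx Y CY) (hy Y CY)).
- assert (Hp : ultra p) by exact (closed_ultra M cM p Mp).
  assert (Mp_right : forall r, M r -> exists y, M y /\ r = umul y p).
  { apply minM.
    - split; [exact (closed_umul_right M p cM Hp)|split; [exists (umul p p); exists p; auto|]].
      intros x y [y1 [My1 ->]] [y2 [My2 ->]]. exists (umul (umul y1 p) y2).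
      split; [exact (sM _ _ (sM _ _ My1 Mp) My2)|rewrite !umul_assoc; reflexivity].
    - intros r [y [My ->]]. exact (sM y p My Mp). }
  destruct (Mp_right p Mp) as [m [Mm em]].
  assert (Mfix : forall r, M r -> M r /\ umul r p = p).
  { apply minM.
    - split; [exact (closed_umul_fixed M p p cM Hp Hp)|split; [exists m; split; [exact Mm|symmetry; exact em]|]].
      intros x y [Mx ex] [My ey]. split; [exact (sM x y Mx My)|rewrite umul_assoc, ey; exact ex].
    - intros r [Mr _]. exact Mr. }
  exists p. split; [exact (MY0 p Mp)|exact (proj2 (Mfix p Mp))].
Qed.

Definition left_ideal (S Y : family) : Prop := forall x y, S x -> Y y -> Y (umul x y).

(* A closed subsemigroup contains a minimal idempotent: one that is the only idempotent
   [r] of the subsemigroup with [r <= p], i.e. [p r = r p = r]. *)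
Lemma minimal_idempotent (Y0 : family) :
  closed Y0 -> (exists y, Y0 y) -> mul_closed Y0 ->
  exists p, Y0 p /\ umul p p = p /\
    forall r, Y0 r -> umul r r = r -> umul p r = r -> umul r p = r -> r = p.
Proof.
intros cY0 nY0 sY0.
destruct (minimal_admissible (left_ideal Y0) Y0) as [M [[cM [nM iM]] [MY0 minM]]].
- split; [exact cY0|split; [exact nY0|exact sY0]].
- intros C HC _ _ x y Y0x hy Y CY. destruct (HC Y CY) as [_ [_ iY]]. exact (iY x y Y0x (hy Y CY)).
- assert (sM : mul_closed M) by (intros x y Mx My; exact (iM x y (MY0 x Mx) My)).
  destruct (ellis_numakura M cM nM sM) as [p [Mp pp]].
  exists p. split; [exact (MY0 p Mp)|split; [exact pp|]].
  intros r Y0r rr pr rp.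
  assert (Mr : M r) by (rewrite <- rp; exact (iM r p Y0r Mp)).
  assert (Hr : ultra r) by exact (closed_ultra M cM r Mr).
  assert (Mr_right : forall z, M z -> exists y, Y0 y /\ z = umul y r).
  { apply minM.
    - split; [exact (closed_umul_right Y0 r cY0 Hr)|split; [exists (umul r r); exists r; auto|]].
      intros x z Y0x [y [Y0y ->]]. exists (umul x y). split; [exact (sY0 x y Y0x Y0y)|].
      rewrite umul_assoc. reflexivity.
    - intros z [y [Y0y ->]]. exact (iM y r Y0y Mr). }
  destruct (Mr_right p Mp) as [y [_ ey]].
  assert (pr' : umul p r = p) by (rewrite ey, umul_assoc, rr; reflexivity).
  rewrite <- pr. exact pr'.
Qed.

Lemma idempotent_below (S0 V0 : family) (p : ufilter) :
  closed S0 -> closed V0 -> mul_closed S0 -> (forall x, V0 x -> S0 x) ->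
  left_ideal S0 V0 -> (forall x y, V0 x -> S0 y -> V0 (umul x y)) -> (exists v, V0 v) ->
  S0 p -> umul p p = p ->
  exists q, V0 q /\ umul q q = q /\ umul p q = q /\ umul q p = q.
Proof.
intros cS cV sS VS iSV iVS [v Vv] Sp pp.
assert (Hp : ultra p) by exact (closed_ultra S0 cS p Sp).
set (Y1 := fun r => (exists w, S0 w /\ r = umul w p) /\ V0 r).
assert (sY1 : mul_closed Y1).
{ intros x y [[w1 [S1 ->]] V1] [[w2 [S2 ->]] V2]. split.
  - exists (umul (umul w1 p) w2). split; [exact (sS _ _ (sS _ _ S1 Sp) S2)|].
    rewrite !umul_assoc. reflexivity.
  - exact (iVS _ _ V1 (VS _ V2)). }
destruct (ellis_numakura Y1) as [e [[[w [Sw ew]] Ve] ee]].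
- exact (closed_inter _ _ (closed_umul_right S0 p cS Hp) cV).
- exists (umul v p). split; [exists v; split; [exact (VS v Vv)|reflexivity]|exact (iVS v p Vv Sp)].
- exact sY1.
- assert (ep : umul e p = e) by (rewrite ew, umul_assoc, pp; reflexivity).
  exists (umul p e). split; [exact (iSV p e Sp Ve)|split; [|split]].
  + rewrite umul_assoc, <- (umul_assoc e p e), ep, ee. reflexivity.
  + rewrite <- umul_assoc, pp. reflexivity.
  + rewrite umul_assoc, ep. reflexivity.
Qed.

Lemma idempotent_star (p : ufilter) (B : X -> Prop) :
  ultra p -> umul p p = p -> p B -> p (fun f => B f /\ p (fun g => B (op f g))).
Proof. intros Hp pp HB. apply (ultra_and Hp HB). rewrite <- pp in HB. exact HB. Qed.

Lemma idempotent_star_shift (p : ufilter) (B : X -> Prop) (f : X) :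
  ultra p -> umul p p = p -> p (fun g => B (op f g)) ->
  p (fun g => B (op f g) /\ p (fun h => B (op (op f g) h))).
Proof.
intros Hp pp H. apply (ultra_mono Hp (idempotent_star p (fun g => B (op f g)) Hp pp H)).
intros g [H1 H2]. split; [exact H1|]. apply (ultra_mono Hp H2). intros h Hh. rewrite op_assoc. exact Hh.
Qed.

End StoneCechSemigroup.

(* Located words: finite lists of entries (position, letter), the variable being [None].
   [lcat f g] appends to [f] the part of [g] lying beyond [f]; this operation is
   associative, so located words form a semigroup. *)
Section LocatedWords.

Context {T : Type}.

Local Notation lword := (list (nat * option T)).

Definition bound (f : lword) : nat := fold_right (fun pr m => Nat.max (S (fst pr)) m) 0 f.

Definition cut (b : nat) (g : lword) : lword := filter (fun pr => Nat.leb b (fst pr)) g.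

Definition lcat (f g : lword) : lword := f ++ cut (bound f) g.

Definition above (n : nat) (f : lword) : Prop := Forall (fun pr => n <= fst pr) f.

Lemma bound_cons (x : nat * option T) (f : lword) : bound (x :: f) = Nat.max (S (fst x)) (bound f).
Proof. reflexivity. Qed.

Lemma bound_app (f g : lword) : bound (f ++ g) = Nat.max (bound f) (bound g).
Proof. induction f as [|x f IH]; [reflexivity|]. simpl app. rewrite !bound_cons, IH. lia. Qed.

Lemma in_bound (f : lword) (pr : nat * option T) : In pr f -> fst pr < bound f.
Proof.
induction f as [|x f IH]; [intros []|]. rewrite bound_cons.
intros [<-|h]; [lia|specialize (IH h); lia].
Qed.

Lemma bound_cut (b : nat) (g : lword) : Nat.max b (bound (cut b g)) = Nat.max b (bound g).
Proof.
induction g as [|x g IH]; [reflexivity|]. unfold cut in *. simpl filter.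
destruct (Nat.leb b (fst x)) eqn:E; rewrite ?bound_cons; [lia|].
apply Nat.leb_gt in E. lia.
Qed.

Lemma cut_cut (a b : nat) (h : lword) : cut a (cut b h) = cut (Nat.max a b) h.
Proof.
unfold cut. induction h as [|x h IH]; [reflexivity|]. simpl filter.
destruct (Nat.leb b (fst x)) eqn:Eb; destruct (Nat.leb (Nat.max a b) (fst x)) eqn:Eab;
  simpl filter; try destruct (Nat.leb a (fst x)) eqn:Ea; rewrite ?IH; try reflexivity;
  repeat match goal with
         | H : Nat.leb _ _ = true |- _ => apply Nat.leb_le in H
         | H : Nat.leb _ _ = false |- _ => apply Nat.leb_gt in H
         end; lia.
Qed.

Lemma cut_above (b : nat) (g : lword) : above b g -> cut b g = g.
Proof.
intros H. induction H as [|x g hx _ IH]; [reflexivity|].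
unfold cut in *. simpl filter. apply Nat.leb_le in hx. rewrite hx, IH. reflexivity.
Qed.

Lemma Forall_cut (P : nat * option T -> Prop) (b : nat) (g : lword) : Forall P g -> Forall P (cut b g).
Proof.
intros H. apply Forall_forall. intros x hx. apply filter_In in hx as [hx _].
exact (proj1 (Forall_forall _ _) H x hx).
Qed.

Lemma lcat_assoc (f g h : lword) : lcat (lcat f g) h = lcat f (lcat g h).
Proof.
unfold lcat. rewrite <- app_assoc. f_equal.
assert (cut_app : forall b (u v : lword), cut b (u ++ v) = cut b u ++ cut b v)
  by (intros; apply filter_app).
rewrite cut_app, cut_cut, bound_app, bound_cut. reflexivity.
Qed.

Lemma lcat_above (f g : lword) : above (bound f) g -> lcat f g = f ++ g.
Proof. intros H. unfold lcat. rewrite cut_above; [reflexivity|exact H]. Qed.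

Lemma above_lcat (n : nat) (f g : lword) : above n f -> above n g -> above n (lcat f g).
Proof. intros hf hg. apply Forall_app. split; [exact hf|exact (Forall_cut _ _ g hg)]. Qed.

Lemma above_bound (m : nat) (f : lword) : f <> [] -> above m f -> m < bound f.
Proof. intros hn ht. destruct f as [|x f]; [contradiction|]. inversion ht; subst. rewrite bound_cons. lia. Qed.

Lemma above_weaken (m m' : nat) (f : lword) : m' <= m -> above m f -> above m' f.
Proof. intros h ht. eapply Forall_impl; [|exact ht]. intros x hx. simpl in *. lia. Qed.


Definition lsubst (a : T) (f : lword) : lword :=
  map (fun pr => (fst pr, Some (match snd pr with None => a | Some b => b end))) f.

Definition is_const (f : lword) : Prop := Forall (fun pr => snd pr <> None) f.

Definition has_var (f : lword) : Prop := exists pr, In pr f /\ snd pr = None.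

Lemma bound_lsubst (a : T) (f : lword) : bound (lsubst a f) = bound f.
Proof. induction f as [|x f IH]; [reflexivity|]. simpl. rewrite IH. reflexivity. Qed.

Lemma lsubst_lcat (a : T) (f g : lword) : lsubst a (lcat f g) = lcat (lsubst a f) (lsubst a g).
Proof.
unfold lcat, lsubst, cut. rewrite map_app. f_equal. fold (lsubst a f). rewrite bound_lsubst.
induction g as [|x g IH]; [reflexivity|]. simpl. destruct (Nat.leb (bound f) (fst x)); simpl; rewrite IH; reflexivity.
Qed.

Lemma lsubst_const (a : T) (f : lword) : is_const f -> lsubst a f = f.
Proof.
intros H. induction H as [|[n o] f hx _ IH]; [reflexivity|]. simpl. rewrite IH.
destruct o; [reflexivity|contradiction].
Qed.

Lemma const_lsubst (a : T) (f : lword) : is_const (lsubst a f).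
Proof. apply Forall_map, Forall_forall. intros x _. discriminate. Qed.

Lemma above_lsubst (a : T) (n : nat) (f : lword) : above n f -> above n (lsubst a f).
Proof. intros H. apply Forall_map. exact H. Qed.

Lemma const_lcat (f g : lword) : is_const f -> is_const g -> is_const (lcat f g).
Proof. intros hf hg. apply Forall_app. split; [exact hf|exact (Forall_cut _ _ g hg)]. Qed.

Lemma has_var_lcat_l (f g : lword) : has_var f -> has_var (lcat f g).
Proof. intros [pr [h1 h2]]. exists pr. split; [apply in_or_app; left; exact h1|exact h2]. Qed.

Lemma has_var_lcat_r (f g : lword) : has_var g -> above (bound f) g -> has_var (lcat f g).
Proof.
intros [pr [h1 h2]] ht. rewrite lcat_above; [|exact ht].
exists pr. split; [apply in_or_app; right; exact h1|exact h2].
Qed.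
End LocatedWords.

Lemma StronglySorted_app {Y : Type} (R : Y -> Y -> Prop) (l1 l2 : list Y) :
  StronglySorted R l1 -> StronglySorted R l2 -> (forall x y, In x l1 -> In y l2 -> R x y) ->
  StronglySorted R (l1 ++ l2).
Proof.
intros h1 h2 h3. induction h1 as [|a l1 _ IH hal]; [exact h2|]. simpl. constructor.
- apply IH. intros x y hx hy. apply h3; [right; exact hx|exact hy].
- apply Forall_app. split; [exact hal|]. apply Forall_forall. intros y hy. apply h3; [left; reflexivity|exact hy].
Qed.

Lemma StronglySorted_app_inv {Y : Type} (R : Y -> Y -> Prop) (l1 l2 : list Y) :
  StronglySorted R (l1 ++ l2) ->
  StronglySorted R l1 /\ StronglySorted R l2 /\ (forall x y, In x l1 -> In y l2 -> R x y).
Proof.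
induction l1 as [|a l1 IH]; simpl; intros H.
- split; [constructor|split; [exact H|intros ? ? []]].
- apply StronglySorted_inv in H as [H1 H2]. destruct (IH H1) as [i1 [i2 i3]].
  rewrite Forall_forall in H2. split; [|split; [exact i2|]].
  + constructor; [exact i1|]. apply Forall_forall. intros x hx. apply H2, in_or_app. left. exact hx.
  + intros x y [<-|hx] hy; [apply H2, in_or_app; right; exact hy|exact (i3 x y hx hy)].
Qed.

Lemma StronglySorted_map {Y Z : Type} (R : Y -> Y -> Prop) (R' : Z -> Z -> Prop) (h : Y -> Z) (l : list Y) :
  (forall x y, R x y -> R' (h x) (h y)) -> StronglySorted R l -> StronglySorted R' (map h l).
Proof.
intros HR H. induction H as [|a l _ IH hal]; simpl; constructor; [exact IH|].
apply Forall_map. exact (Forall_impl _ (HR a) hal).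
Qed.

Section LocatedAlphabet.

Context {T : Type} (A : nat -> list T).
Hypothesis hA : alphabet_seq A.
Variable k : nat.

Local Notation lword := (list (nat * option T)).

Definition located (f : lword) : Prop :=
  f <> [] /\ StronglySorted (fun p q => fst p < fst q) f /\
  Forall (fun pr => match snd pr with None => True | Some a => In a (A (k + fst pr)) end) f.

Lemma alphabet_mono (i j : nat) (a : T) : i <= j -> In a (A i) -> In a (A j).
Proof. intros hij. induction hij as [|j _ IH]; [auto|]. intros h. exact (proj2 hA j a (IH h)). Qed.

Lemma located_lcat (f g : lword) : located f -> located g -> above (bound f) g -> located (lcat f g).
Proof.
intros [n1 [s1 l1]] [_ [s2 l2]] ht. rewrite lcat_above; [|exact ht]. split; [|split].
- destruct f; [contradiction|discriminate].
- apply StronglySorted_app; [exact s1|exact s2|]. intros x y hx hy.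
  apply in_bound in hx. pose proof (proj1 (Forall_forall _ _) ht y hy). simpl in *. lia.
- apply Forall_app. split; assumption.
Qed.

Lemma located_lsubst (j : nat) (a : T) (f : lword) :
  In a (A j) -> located f -> above j f -> located (lsubst a f).
Proof.
intros ha [n1 [s1 l1]] ht. split; [|split].
- destruct f; [contradiction|discriminate].
- apply (StronglySorted_map (fun p q => fst p < fst q)); [|exact s1]. intros x y; simpl; auto.
- apply Forall_map, Forall_forall. intros x hx. simpl.
  pose proof (proj1 (Forall_forall _ _) ht x hx) as hj. pose proof (proj1 (Forall_forall _ _) l1 x hx) as hl.
  simpl in hj, hl. destruct (snd x); [exact hl|]. apply (alphabet_mono j); [lia|exact ha].
Qed.

End LocatedAlphabet.

Section LocatedUltrafilters.

Context {T : Type} (A : nat -> list T).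
Hypothesis hA : alphabet_seq A.
Variable k : nat.

Local Notation lword := (list (nat * option T)).
Local Notation ufilter := ((lword -> Prop) -> Prop).
Local Notation located := (located A k).

(* Sets that every ultrafilter of interest contains: located words, and words
   lying entirely beyond any given position. *)
Definition tails (P : lword -> Prop) : Prop := P = located \/ exists n, P = above n.
Definition const_tails (P : lword -> Prop) : Prop := tails P \/ P = is_const.
Definition var_tails (P : lword -> Prop) : Prop := tails P \/ P = has_var.

Lemma tails_umul (p q : ufilter) (P : lword -> Prop) :
  ultra_over tails p -> ultra_over tails q -> tails P -> umul lcat p q P.
Proof.
intros [Hp HP] [Hq HQ] [->|[n ->]].
- apply (umul_intro lcat p q _ located (fun f g => located g /\ above (bound f) g)); auto.
  + apply HP. left. reflexivity.
  + intros f _. apply (ultra_and Hq); [apply HQ; left; reflexivity|apply HQ; right; eexists; reflexivity].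
  + intros f g hf [hg ht]. exact (located_lcat A k f g hf hg ht).
- apply (umul_intro lcat p q _ (above n) (fun _ g => above n g)); auto.
  + apply HP. right. eexists. reflexivity.
  + intros f _. apply HQ. right. eexists. reflexivity.
  + intros f g hf hg. exact (above_lcat n f g hf hg).
Qed.

Lemma weaken_const (r : ufilter) : ultra_over const_tails r -> ultra_over tails r.
Proof. intros [Hr HR]. split; [exact Hr|]. intros P HP. apply HR. left. exact HP. Qed.

Lemma weaken_var (r : ufilter) : ultra_over var_tails r -> ultra_over tails r.
Proof. intros [Hr HR]. split; [exact Hr|]. intros P HP. apply HR. left. exact HP. Qed.

Lemma tails_mul_closed : mul_closed lcat (ultra_over tails).
Proof.
intros p q Hp Hq. split; [exact (ultra_umul lcat p q (proj1 Hp) (proj1 Hq))|].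
intros P HP. exact (tails_umul p q P Hp Hq HP).
Qed.

Lemma const_mul_closed : mul_closed lcat (ultra_over const_tails).
Proof.
intros p q Hp Hq. split; [exact (ultra_umul lcat p q (proj1 Hp) (proj1 Hq))|].
intros P [HP| ->]; [exact (tails_umul p q P (weaken_const p Hp) (weaken_const q Hq) HP)|].
apply (umul_intro lcat p q _ is_const (fun _ g => is_const g)); try exact (proj1 Hp); try exact (proj1 Hq).
- apply (proj2 Hp). right. reflexivity.
- intros f _. apply (proj2 Hq). right. reflexivity.
- intros f g hf hg. exact (const_lcat f g hf hg).
Qed.

Lemma var_umul_tails (p q : ufilter) :
  ultra_over var_tails p -> ultra_over tails q -> ultra_over var_tails (umul lcat p q).
Proof.
intros Hp Hq. split; [exact (ultra_umul lcat p q (proj1 Hp) (proj1 Hq))|].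
intros P [HP| ->]; [exact (tails_umul p q P (weaken_var p Hp) Hq HP)|].
apply (umul_intro lcat p q _ has_var (fun _ _ => True)); try exact (proj1 Hp); try exact (proj1 Hq).
- apply (proj2 Hp). right. reflexivity.
- intros f _. exact (ultra_True (proj1 Hq)).
- intros f g hf _. exact (has_var_lcat_l f g hf).
Qed.

Lemma tails_umul_var (p q : ufilter) :
  ultra_over tails p -> ultra_over var_tails q -> ultra_over var_tails (umul lcat p q).
Proof.
intros Hp Hq. split; [exact (ultra_umul lcat p q (proj1 Hp) (proj1 Hq))|].
intros P [HP| ->]; [exact (tails_umul p q P Hp (weaken_var q Hq) HP)|].
apply (umul_intro lcat p q _ (fun _ => True) (fun f g => has_var g /\ above (bound f) g));
  try exact (proj1 Hp); try exact (proj1 Hq).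
- exact (ultra_True (proj1 Hp)).
- intros f _. apply (ultra_and (proj1 Hq)); apply (proj2 Hq); [right; reflexivity|left; right; eexists; reflexivity].
- intros f g _ [hg ht]. exact (has_var_lcat_r f g hg ht).
Qed.

Definition push (a : T) (q : ufilter) : ufilter := fun P => q (fun f => P (lsubst a f)).

Lemma ultra_push (a : T) (q : ufilter) : ultra q -> ultra (push a q).
Proof.
intros Hq. unfold push. split.
- exact (ultra_True Hq).
- exact (ultra_False Hq).
- intros P Q HP PQ. apply (ultra_mono Hq HP). intros f. apply PQ.
- intros P Q HP HQ. exact (ultra_and Hq HP HQ).
- intros P. exact (ultra_dec Hq (fun f => P (lsubst a f))).
Qed.

Lemma push_umul (a : T) (p q : ufilter) : push a (umul lcat p q) = umul lcat (push a p) (push a q).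
Proof.
unfold push, umul. extensionality P. f_equal. extensionality f. f_equal. extensionality g.
rewrite lsubst_lcat. reflexivity.
Qed.

Lemma push_const (a : T) (p : ufilter) : ultra_over const_tails p -> push a p = p.
Proof.
intros [Hp HP]. apply ultra_ext; [exact (ultra_push a p Hp)|exact Hp|]. intros P HaP.
apply (ultra_mono Hp (ultra_and Hp HaP (HP is_const (or_intror eq_refl)))).
intros f [h1 h2]. rewrite lsubst_const in h1; assumption.
Qed.

Lemma push_tails (a : T) (q : ufilter) :
  inA A a -> ultra_over tails q -> ultra_over const_tails (push a q).
Proof.
intros [j ha] [Hq HQ]. split; [exact (ultra_push a q Hq)|]. unfold push.
intros P [[->|[n ->]]| ->].
- apply (ultra_mono Hq (ultra_and Hq (HQ _ (or_introl eq_refl)) (HQ (above j) (or_intror (ex_intro _ j eq_refl))))).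
  intros f [h1 h2]. exact (located_lsubst A hA k j a f ha h1 h2).
- apply (ultra_mono Hq (HQ (above n) (or_intror (ex_intro _ n eq_refl)))).
  intros f h. exact (above_lsubst a n f h).
- apply (ultra_mono Hq (ultra_True Hq)). intros f _. apply const_lsubst.
Qed.

(* An ultrafilter over [var_tails] exists: single variables at late positions witness
   the finite intersection property. *)
Lemma var_tails_nonempty : exists v, ultra_over var_tails v.
Proof.
destruct (ultra_extend var_tails) as [v Hv]; [|exists v; exact Hv].
intros l Hl.
assert (Hlate : exists N0, forall N, N0 <= N -> forall P, In P l -> P [(N, @None T)]).
{ induction l as [|P l IH].
  - exists 0. intros N _ P [].
  - destruct (IH (fun Q hQ => Hl Q (or_intror hQ))) as [N0 HN].
    destruct (Hl P (or_introl eq_refl)) as [[->|[n ->]]| ->].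
    + exists N0. intros N hN Q [<-|hQ]; [|exact (HN N hN Q hQ)].
      split; [discriminate|split; [repeat constructor|repeat constructor]].
    + exists (Nat.max N0 n). intros N hN Q [<-|hQ]; [|apply HN; [lia|exact hQ]].
      constructor; [simpl; lia|constructor].
    + exists N0. intros N hN Q [<-|hQ]; [|exact (HN N hN Q hQ)].
      exists (N, None). split; [left; reflexivity|reflexivity]. }
destruct Hlate as [N0 HN]. exists [(N0, None)]. apply HN. lia.
Qed.

(* The two ultrafilters driving the construction: a minimal idempotent [p] concentrated
   on constant located words and an idempotent [q <= p] concentrated on variable words;
   by minimality every substitution image of [q] is [p]. *)
Lemma key_ultrafilters :
  exists p q, ultra_over const_tails p /\ umul lcat p p = p /\ ultra_over var_tails q /\
    forall a, inA A a -> push a q = p.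
Proof.
destruct var_tails_nonempty as [v Hv].
assert (Ha0 : exists a0, In a0 (A 0)).
{ destruct (A 0) as [|a0 l0] eqn:E; [exfalso; exact (proj1 hA 0 E)|]. exists a0. left. reflexivity. }
destruct Ha0 as [a0 Ha0].
destruct (minimal_idempotent lcat (@lcat_assoc T) (ultra_over const_tails)) as [p [Cp [pp pmin]]].
- apply closed_ultra_over.
- exists (push a0 v). exact (push_tails a0 v (ex_intro _ 0 Ha0) (weaken_var v Hv)).
- exact const_mul_closed.
- destruct (idempotent_below lcat (@lcat_assoc T) (ultra_over tails) (ultra_over var_tails) p)
    as [q [Vq [qq [pq qp]]]].
  + apply closed_ultra_over.
  + apply closed_ultra_over.
  + exact tails_mul_closed.
  + exact weaken_var.
  + intros x y Hx Hy. exact (tails_umul_var x y Hx Hy).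
  + intros x y Hx Hy. exact (var_umul_tails x y Hx Hy).
  + exists v. exact Hv.
  + exact (weaken_const p Cp).
  + exact pp.
  + exists p, q. split; [exact Cp|split; [exact pp|split; [exact Vq|]]].
    intros a Ha. apply pmin.
    * exact (push_tails a q Ha (weaken_var q Vq)).
    * rewrite <- push_umul, qq. reflexivity.
    * rewrite <- (push_const a p Cp) at 1. rewrite <- push_umul, pq. reflexivity.
    * rewrite <- (push_const a p Cp) at 1. rewrite <- push_umul, qp. reflexivity.
Qed.

End LocatedUltrafilters.

(* Galvin-Glazer construction: given [p B], choose variable blocks one after the other so
   that all constant combinations of blocks stay in [B]. *)
Section Construction.

Context {T : Type} (A : nat -> list T) (k : nat).

Local Notation lword := (list (nat * option T)).
Local Notation ufilter := ((lword -> Prop) -> Prop).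

Definition combine (fs : nat -> lword) (ls : list (nat * T)) : lword :=
  concat (map (fun pr => lsubst (snd pr) (fs (fst pr))) ls).

Definition letter_choice (ls : list (nat * T)) : Prop :=
  ls <> [] /\ StronglySorted (fun x y => fst x < fst y) ls /\
  Forall (fun pr => In (snd pr) (A (k + fst pr))) ls.

Variables p q : ufilter.
Hypothesis Cp : ultra_over (const_tails A k) p.
Hypothesis pp : umul lcat p p = p.
Hypothesis Vq : ultra_over (var_tails A k) q.
Hypothesis push_q : forall a, inA A a -> push a q = p.
Variable B : lword -> Prop.
Hypothesis pB : p B.

Definition good (f : lword) : Prop := B f /\ p (fun g => B (lcat f g)).

Definition good_block (n : nat) (G : list lword) (m : nat) (f : lword) : Prop :=
  located A k f /\ has_var f /\ above m f /\
  forall a, In a (A (k + n)) -> good (lsubst a f) /\ forall g, In g G -> good (lcat g (lsubst a f)).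

(* Such a block exists: [q]-almost every word qualifies, because [push a q = p]
   and [p] is idempotent. *)
Lemma good_block_exists (n : nat) (G : list lword) (m : nat) :
  (forall g, In g G -> good g) -> exists f, good_block n G m f.
Proof.
intros HG. destruct Cp as [Hp _]. destruct Vq as [Hq HQ].
set (D := fun g => good g /\ forall g', In g' G -> good (lcat g' g)).
assert (pD : p D).
{ apply (ultra_and Hp (idempotent_star lcat p B Hp pp pB)).
  apply (ultra_forall_in p G (fun g' g => good (lcat g' g)) Hp).
  intros g' Hg'. exact (idempotent_star_shift lcat (@lcat_assoc T) p B g' Hp pp (proj2 (HG g' Hg'))). }
assert (qD : q (fun f => located A k f /\ has_var f /\ above m f /\ forall a, In a (A (k + n)) -> D (lsubst a f))).
{ apply (ultra_and Hq (HQ _ (or_introl (or_introl eq_refl)))).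
  apply (ultra_and Hq (HQ _ (or_intror eq_refl))).
  apply (ultra_and Hq (HQ _ (or_introl (or_intror (ex_intro _ m eq_refl))))).
  apply (ultra_forall_in q (A (k + n)) (fun a f => D (lsubst a f)) Hq).
  intros a Ha. change (push a q D). rewrite push_q; [exact pD|exists (k + n); exact Ha]. }
destruct (ultra_nonempty q _ Hq qD) as [f Hf]. exists f. exact Hf.
Qed.

Definition next_block (n : nat) (G : list lword) (m : nat) : lword :=
  epsilon (inhabits []) (good_block n G m).

Definition extensions (n : nat) (G : list lword) (f : lword) : list lword :=
  map (fun a => lsubst a f) (A (k + n)) ++
  flat_map (fun g => map (fun a => lcat g (lsubst a f)) (A (k + n))) G.

(* [stage n] = (all combinations of the first [n] blocks, bound of the last block). *)
Fixpoint stage (n : nat) : list lword * nat :=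
  match n with
  | 0 => ([], 0)
  | S n => let f := next_block n (fst (stage n)) (snd (stage n)) in
           (fst (stage n) ++ extensions n (fst (stage n)) f, bound f)
  end.

Definition block (n : nat) : lword := next_block n (fst (stage n)) (snd (stage n)).

Lemma stage_invariant (n : nat) :
  (forall g, In g (fst (stage n)) -> good g /\ bound g <= snd (stage n)) /\
  good_block n (fst (stage n)) (snd (stage n)) (block n).
Proof.
assert (Hblock : forall n, (forall g, In g (fst (stage n)) -> good g) ->
                   good_block n (fst (stage n)) (snd (stage n)) (block n)).
{ intros m Hm. unfold block, next_block. apply epsilon_spec, good_block_exists, Hm. }
induction n as [|n [IG Hf]].
- split; [intros g []|]. apply Hblock. intros g [].
- assert (IG' : forall g, In g (fst (stage (S n))) -> good g /\ bound g <= snd (stage (S n))).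
  { change (fst (stage (S n))) with (fst (stage n) ++ extensions n (fst (stage n)) (block n)).
    change (snd (stage (S n))) with (bound (block n)).
    destruct Hf as [[fne _] [_ [tlf Hf]]].
    assert (mf : snd (stage n) < bound (block n)) by exact (above_bound _ _ fne tlf).
    intros g Hg. apply in_app_or in Hg as [Hg|Hg]; [|apply in_app_or in Hg as [Hg|Hg]].
    - destruct (IG g Hg) as [Gg bg]. split; [exact Gg|lia].
    - apply in_map_iff in Hg as [a [<- Ha]].
      split; [exact (proj1 (Hf a Ha))|rewrite bound_lsubst; lia].
    - apply in_flat_map in Hg as [g' [Hg' Hg]]. apply in_map_iff in Hg as [a [<- Ha]].
      split; [exact (proj2 (Hf a Ha) g' Hg')|]. destruct (IG g' Hg') as [_ bg'].
      unfold lcat. rewrite bound_app. pose proof (bound_cut (bound g') (lsubst a (block n))) as Hc.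
      rewrite bound_lsubst in Hc. lia. }
  split; [exact IG'|]. apply Hblock. intros g Hg. exact (proj1 (IG' g Hg)).
Qed.

Lemma stage_mono (n N : nat) (g : lword) : n <= N -> In g (fst (stage n)) -> In g (fst (stage N)).
Proof.
intros h. induction h as [|N _ IH]; [auto|]. intros Hg.
change (In g (fst (stage N) ++ extensions N (fst (stage N)) (block N))).
apply in_or_app. left. exact (IH Hg).
Qed.

Lemma combination_in_stage (ls : list (nat * T)) (N : nat) :
  letter_choice ls -> (forall pr, In pr ls -> fst pr < N) -> In (combine block ls) (fst (stage N)).
Proof.
revert N. induction ls as [|[l a] ls' IH] using rev_ind; intros N [hne [hs hl]] hN; [contradiction|].
apply StronglySorted_app_inv in hs as [s1 [_ s3]].
apply Forall_app in hl as [l1 l2]. apply Forall_inv in l2. simpl in l2.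
assert (lN : l < N) by (apply (hN (l, a)), in_or_app; right; left; reflexivity).
assert (Ecomb : combine block (ls' ++ [(l, a)]) = combine block ls' ++ lsubst a (block l)).
{ unfold combine. rewrite map_app, concat_app. simpl. rewrite app_nil_r. reflexivity. }
rewrite Ecomb. apply (stage_mono (S l)); [lia|].
change (In (combine block ls' ++ lsubst a (block l))
           (fst (stage l) ++ extensions l (fst (stage l)) (block l))).
apply in_or_app. right. unfold extensions. apply in_or_app.
destruct ls' as [|y ls''].
- left. apply in_map_iff. exists a. split; [reflexivity|exact l2].
- right. assert (Hin : In (combine block (y :: ls'')) (fst (stage l))).
  { apply IH; [split; [discriminate|split; assumption]|].
    intros pr hpr. exact (s3 pr (l, a) hpr (or_introl eq_refl)). }
  apply in_flat_map. exists (combine block (y :: ls'')). split; [exact Hin|].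
  apply in_map_iff. exists a. split; [|exact l2]. apply lcat_above.
  destruct (stage_invariant l) as [IG [_ [_ [tlf _]]]].
  apply above_lsubst. exact (above_weaken _ _ _ (proj2 (IG _ Hin)) tlf).
Qed.

Lemma combination_good (ls : list (nat * T)) : letter_choice ls -> B (combine block ls).
Proof.
intros Hls.
assert (HN : exists N, forall pr, In pr ls -> fst pr < N).
{ clear Hls. induction ls as [|x ls [N hN]]; [exists 0; intros ? []|].
  exists (Nat.max N (S (fst x))). intros pr [<-|h]; [lia|specialize (hN pr h); lia]. }
destruct HN as [N HN].
exact (proj1 (proj1 (proj1 (stage_invariant N) _ (combination_in_stage ls N Hls HN)))).
Qed.

End Construction.

Section Evaluation.

Context {T : Type} (A : nat -> list T) (k : nat) (s : nat -> list (option T)).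

Local Notation lword := (list (nat * option T)).

Definition eval (f : lword) : list (option T) :=
  concat (map (fun pr => vsubst (s (fst pr)) (snd pr)) f).

Definition eval_const (f : lword) : list T :=
  concat (map (fun pr => match snd pr with Some b => csubst (s (fst pr)) b | None => [] end) f).

Lemma csubst_vsubst (w : list (option T)) (o : option T) (a : T) :
  csubst (vsubst w o) a = csubst w (match o with None => a | Some b => b end).
Proof. induction w as [|[b|] w IH]; simpl; rewrite ?IH; reflexivity. Qed.

Lemma eval_const_lsubst (a : T) (f : lword) : eval_const (lsubst a f) = csubst (eval f) a.
Proof.
induction f as [|x f IH]; [reflexivity|].
change (csubst (s (fst x)) (match snd x with None => a | Some b => b end) ++ eval_const (lsubst a f)
        = csubst (vsubst (s (fst x)) (snd x) ++ eval f) a).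
assert (csubst_app : forall u v : list (option T), csubst (u ++ v) a = csubst u a ++ csubst v a)
  by (intros; apply map_app).
rewrite csubst_app, IH, csubst_vsubst. reflexivity.
Qed.

Lemma eval_const_combine (fs : nat -> lword) (ls : list (nat * T)) :
  eval_const (combine fs ls) = concat (map (fun pr => csubst (eval (fs (fst pr))) (snd pr)) ls).
Proof.
induction ls as [|x ls IH]; [reflexivity|]. unfold combine, eval_const in *. simpl.
rewrite map_app, concat_app, IH. f_equal. exact (eval_const_lsubst (snd x) (fs (fst x))).
Qed.

Lemma eval_is_vword (f : lword) : is_vseq A s -> located A k f -> has_var f -> is_vword A (eval f).
Proof.
intros hs [_ [_ hl]] [pr [hpr hN]]. split.
- apply in_concat. exists (vsubst (s (fst pr)) (snd pr)). split; [apply in_map_iff; exists pr; split; [reflexivity|exact hpr]|].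
  rewrite hN. apply in_map_iff. exists None. split; [reflexivity|exact (proj1 (hs (fst pr)))].
- intros a ha. apply in_concat in ha as [l [hl1 hl2]]. apply in_map_iff in hl1 as [x [<- hx]].
  apply in_map_iff in hl2 as [[b|] [hb hin]].
  + injection hb as <-. exact (proj2 (hs (fst x)) b hin).
  + pose proof (proj1 (Forall_forall _ _) hl x hx) as hxl. simpl in hxl. rewrite hb in hxl.
    exists (k + fst x). exact hxl.
Qed.

Lemma eval_extracted (fs : nat -> lword) (m : nat -> nat) :
  m 0 = 0 ->
  (forall n, located A k (fs n) /\ has_var (fs n) /\ above (m n) (fs n) /\ m (S n) = bound (fs n)) ->
  extracted A k (fun n => eval (fs n)) s.
Proof.
intros m0 Hfs l. exists m. split; [exact m0|split].
- intros i _. destruct (Hfs i) as [[hne _] [_ [ht ->]]]. exact (above_bound _ _ hne ht).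
- intros i _. destruct (Hfs i) as [[_ [hss hl]] [hv [ht e]]]. exists (fs i). split; [|split; [|split]].
  + exact (StronglySorted_Sorted hss).
  + apply Forall_forall. intros x hx. split.
    * split; [exact (proj1 (Forall_forall _ _) ht x hx)|rewrite e; exact (in_bound _ x hx)].
    * exact (proj1 (Forall_forall _ _) hl x hx).
  + exact hv.
  + reflexivity.
Qed.

End Evaluation.

Lemma cspan_choice {T : Type} (A : nat -> list T) (k : nat) (t : nat -> list (option T)) (w : list T) :
  cspan t (fun n => A (k + n)) (fun _ => True) w ->
  exists ls, letter_choice A k ls /\ w = concat (map (fun pr => csubst (t (fst pr)) (snd pr)) ls).
Proof.
intros [ls [hne [hs [hl ->]]]]. exists ls. split; [|reflexivity]. split; [exact hne|split].
- apply Sorted_StronglySorted; [intros x y z; simpl; lia|exact hs].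
- exact (Forall_impl _ (fun pr H => proj2 H) hl).
Qed.

Lemma homogeneous_sequence {T : Type} (A : nat -> list T) (k : nat) (s : nat -> list (option T))
  (hs : is_vseq A s) (p q : (list (nat * option T) -> Prop) -> Prop)
  (Cp : ultra_over (const_tails A k) p) (pp : umul lcat p p = p)
  (Vq : ultra_over (var_tails A k) q) (push_q : forall a, inA A a -> push a q = p)
  (B : list (nat * option T) -> Prop) (pB : p B) :
  exists t, is_vseq A t /\ extracted A k t s /\
    forall w, cspan t (fun n => A (k + n)) (fun _ => True) w -> exists f, B f /\ w = eval_const s f.
Proof.
set (fs := block A k p B).
assert (Hfs : forall n, located A k (fs n) /\ has_var (fs n) /\ above (snd (stage A k p B n)) (fs n) /\
                        snd (stage A k p B (S n)) = bound (fs n)).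
{ intros n. destruct (stage_invariant A k p q Cp pp Vq push_q B pB n) as [_ [hl [hv [ht _]]]].
  split; [exact hl|split; [exact hv|split; [exact ht|reflexivity]]]. }
exists (fun n => eval s (fs n)). split; [|split].
- intros n. destruct (Hfs n) as [hl [hv _]]. exact (eval_is_vword A k s (fs n) hs hl hv).
- exact (eval_extracted A k s fs (fun n => snd (stage A k p B n)) eq_refl Hfs).
- intros w Hw. destruct (cspan_choice A k _ w Hw) as [ls [Hls ->]].
  exists (combine fs ls). split.
  + exact (combination_good A k p q Cp pp Vq push_q B pB ls Hls).
  + symmetry. apply eval_const_combine.
Qed.

Lemma span_homogeneous {T : Type} (A : nat -> list T) (hA : alphabet_seq A) (k : nat)
  (E : list T -> Prop) (s : nat -> list (option T)) (hs : is_vseq A s) :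
  exists t, is_vseq A t /\ extracted A k t s /\
    ((forall w, cspan t (fun n => A (k + n)) (fun _ => True) w -> E w) \/
     (forall w, cspan t (fun n => A (k + n)) (fun _ => True) w -> ~ E w)).
Proof.
destruct (key_ultrafilters A hA k) as [p [q [Cp [pp [Vq push_q]]]]].
destruct (ultra_dec (proj1 Cp) (fun f => E (eval_const s f))) as [HE|HnE].
- destruct (homogeneous_sequence A k s hs p q Cp pp Vq push_q _ HE) as [t [Ht [Hext Hspan]]].
  exists t. split; [exact Ht|split; [exact Hext|left]].
  intros w Hw. destruct (Hspan w Hw) as [f [Ef ->]]. exact Ef.
- destruct (homogeneous_sequence A k s hs p q Cp pp Vq push_q _ HnE) as [t [Ht [Hext Hspan]]].
  exists t. split; [exact Ht|split; [exact Hext|right]].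
  intros w Hw. destruct (Hspan w Hw) as [f [nEf ->]]. exact nEf.
Qed.

Theorem corollary3p10 (T : Type) (A : nat -> list T) (hA : alphabet_seq A)
  (k : nat) (E : list T -> Prop) (hE : forall w, E w -> is_word A w)
  (s : nat -> list (option T)) (hs : is_vseq A s)
  (hlarge : k_large A k E s) :
  exists t : nat -> list (option T),
    is_vseq A t /\ extracted A k t s /\
    (forall w, cspan t (fun n => A (k + n)) (fun _ => True) w -> E w).
Proof.
destruct (span_homogeneous A hA k E s hs) as [t [Ht [Hext [HinE|HoutE]]]].
- exists t. split; [exact Ht|split; [exact Hext|exact HinE]].
- exfalso. destruct (hlarge t Ht Hext) as [u [Eu Hu]]. exact (HoutE u Hu Eu).
Qed.
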